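(* Let $F$ be a field and $V$ an infinite-dimensional vector space over $F$, viewed as a structure in the signature consisting of $+$, $-$, $0$ and, for each $\lambda\in F$, a unary function symbol for scalar multiplication by $\lambda$. Let $I$ be the set of finite-dimensional subspaces of $V$, ordered by inclusion, each viewed as a substructure. Then $\lim_I\mathrm{Th}(W^* )=\mathrm{Th}(V^* )$, where $W$ ranges over $I$.
   Context: For a structure $\mathcal{T}$ with universe $T$, $\mathrm{Th}(\mathcal{T}^* )$ is the set of sentences in the given signature expanded by a constant for each element of $T$ that are true in $\mathcal{T}$; these are regarded as subsets of the set of sentences with constants from $V$. For a family $\{\Delta_i\}_{i\in I}$ indexed by a directed set: $\limsup_I \Delta_i=\{\theta: \forall i\ \exists j\ge i\ [\theta\in\Delta_j]\}$, $\liminf_I \Delta_i=\{\theta: \exists i\ \forall j\ge i\ [\theta\in\Delta_j]\}$, and $\lim_I\Delta_i=\Delta$ means both equal $\Delta$. *)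

From HB Require Import structures.
From mathcomp Require Import all_boot all_order all_algebra.
Set Implicit Arguments. Unset Strict Implicit. Unset Printing Implicit Defensive.
Import Order.TTheory GRing.Theory Num.Theory.
Local Open Scope ring_scope.

Inductive term (F V : Type) : Type :=
| Tvar : nat -> term F V
| Tconst : V -> term F V
| Tzero : term F V
| Tadd : term F V -> term F V -> term F V
| Topp : term F V -> term F V
| Tscale : F -> term F V -> term F V.

Inductive formula (F V : Type) : Type :=
| Fequ : term F V -> term F V -> formula F V
| Ffalse : formula F V
| Fnot : formula F V -> formula F V
| Fand : formula F V -> formula F V -> formula F V
| For : formula F V -> formula F V -> formula F V
| Fimp : formula F V -> formula F V -> formula F V
| Fforall : nat -> formula F V -> formula F V
| Fexists : nat -> formula F V -> formula F V.

Section Syntax.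
Variables (F V : Type).

Fixpoint fv_term (t : term F V) : seq nat :=
  match t with
  | Tvar n => [:: n]
  | Tconst _ | Tzero => [::]
  | Tadd t u => fv_term t ++ fv_term u
  | Topp t => fv_term t
  | Tscale _ t => fv_term t
  end.

Fixpoint fv (f : formula F V) : seq nat :=
  match f with
  | Fequ t u => fv_term t ++ fv_term u
  | Ffalse => [::]
  | Fnot g => fv g
  | Fand g h | For g h | Fimp g h => fv g ++ fv h
  | Fforall n g | Fexists n g => [seq m <- fv g | m != n]
  end.

Definition sentence (f : formula F V) : Prop := fv f = [::].

Fixpoint consts_in_term (W : V -> Prop) (t : term F V) : Prop :=
  match t with
  | Tvar _ | Tzero => True
  | Tconst v => W v
  | Tadd t u => consts_in_term W t /\ consts_in_term W u
  | Topp t => consts_in_term W t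
  | Tscale _ t => consts_in_term W t
  end.

Fixpoint consts_in (W : V -> Prop) (f : formula F V) : Prop :=
  match f with
  | Fequ t u => consts_in_term W t /\ consts_in_term W u
  | Ffalse => True
  | Fnot g => consts_in W g
  | Fand g h | For g h | Fimp g h => consts_in W g /\ consts_in W h
  | Fforall _ g | Fexists _ g => consts_in W g
  end.
End Syntax.

Section Semantics.
Variables (F : fieldType) (V : lmodType F).

Fixpoint eval_term (e : nat -> V) (t : term F V) : V :=
  match t with
  | Tvar n => e n
  | Tconst v => v
  | Tzero => 0
  | Tadd t u => eval_term e t + eval_term e u
  | Topp t => - eval_term e t
  | Tscale a t => a *: eval_term e t
  end.

Definition upd (e : nat -> V) (n : nat) (x : V) : nat -> V :=
  fun m => if m == n then x else e m.

(* Satisfaction in the substructure with universe W (a subspace of V):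
   quantifiers range over the elements of W. *)
Fixpoint holds (W : V -> Prop) (e : nat -> V) (f : formula F V) : Prop :=
  match f with
  | Fequ t u => eval_term e t = eval_term e u
  | Ffalse => False
  | Fnot g => ~ holds W e g
  | Fand g h => holds W e g /\ holds W e h
  | For g h => holds W e g \/ holds W e h
  | Fimp g h => holds W e g -> holds W e h
  | Fforall n g => forall x, W x -> holds W (upd e n x) g
  | Fexists n g => exists x, W x /\ holds W (upd e n x) g
  end.

(* Th(W^* ): sentences with constants from W true in the substructure W,
   regarded as a set of sentences with constants from V. *)
Definition Th (W : V -> Prop) (f : formula F V) : Prop :=
  sentence f /\ consts_in W f /\ holds W (fun _ => 0) f.

Definition ThV : formula F V -> Prop := Th (fun _ => True).

Definition span_of (s : seq V) (x : V) : Prop :=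
  exists c : 'I_(size s) -> F, x = \sum_(i < size s) c i *: s`_i.

Definition fin_dim_subspace (W : V -> Prop) : Prop :=
  exists s : seq V, forall x, W x <-> span_of s x.

Definition infinite_dim : Prop := forall s : seq V, exists x, ~ span_of s x.

Definition FinSub := {W : V -> Prop | fin_dim_subspace W}.
Definition fs_le (W1 W2 : FinSub) : Prop :=
  forall x, proj1_sig W1 x -> proj1_sig W2 x.
End Semantics.

Definition limsup (I X : Type) (le : I -> I -> Prop) (D : I -> X -> Prop)
  (th : X) : Prop := forall i, exists j, le i j /\ D j th.
Definition liminf (I X : Type) (le : I -> I -> Prop) (D : I -> X -> Prop)
  (th : X) : Prop := exists i, forall j, le i j -> D j th.
Definition is_lim (I X : Type) (le : I -> I -> Prop) (D : I -> X -> Prop)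
  (L : X -> Prop) : Prop :=
  (forall th, limsup le D th <-> L th) /\ (forall th, liminf le D th <-> L th).

(* Fix a sentence th, let C be its constants and q its quantifier depth, and
   pick q vectors B linearly independent over C.  For every subspace W
   containing C and B, th holds in W iff it holds in V, by a back-and-forth
   argument between W and V whose partial maps preserve all linear relations
   over C.  An element in the span of C and of the elements chosen so far is
   answered by the same linear combination on the other side; an element
   outside that span is answered by one outside the corresponding span, which
   exists in V because V is infinite-dimensional, and in W because fewer than
   q chosen elements cannot absorb B (Steinitz exchange).  Hence membership of
   th in the theories of W and of V agrees eventually along I. *)

From mathcomp Require Import all_boot all_order all_algebra.
From Stdlib Require Import Classical.
Set Implicit Arguments. Unset Strict Implicit. Unset Printing Implicit Defensive.
Import GRing.Theory.
Local Open Scope ring_scope.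

Lemma is_lim_eventually (I X : Type) (le : I -> I -> Prop) (D : I -> X -> Prop)
    (L P : X -> Prop) (i0 : I) :
  (forall i j, exists k, le i k /\ le j k) ->
  (forall i th, D i th -> P th) -> (forall th, L th -> P th) ->
  (forall th, P th -> exists i, forall j, le i j -> (D j th <-> L th)) ->
  is_lim le D L.
Proof.
move=> directed DP LP eventually; split=> th; split.
- move=> sup; have [j [_ /DP /eventually [i Hi]]] := sup i0.
  by have [k [ik Dk]] := sup i; apply/(Hi k ik).
- move=> /[dup] /LP /eventually [i Hi] Lth j.
  by have [k [jk ik]] := directed j i; exists k; split=> //; apply/(Hi k ik).
- move=> [i inf]; have [k [ik _]] := directed i i.
  have [i1 Hi1] := eventually th (DP _ _ (inf k ik)).
  by have [m [im i1m]] := directed i i1; apply/(Hi1 m i1m)/inf.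
- by move=> /[dup] /LP /eventually [i Hi] Lth; exists i => j ij; apply/(Hi j ij).
Qed.

Lemma back_forth_iff_quantifiers (T T' : Type) (U : T -> Prop) (U' : T' -> Prop)
    (R : T -> T' -> Prop) (P : T -> Prop) (P' : T' -> Prop) :
  (forall x, U x -> exists2 x', U' x' & R x x') ->
  (forall x', U' x' -> exists2 x, U x & R x x') ->
  (forall x x', U x -> R x x' -> (P x <-> P' x')) ->
  ((forall x, U x -> P x) <-> (forall x', U' x' -> P' x')) /\
  ((exists x, U x /\ P x) <-> (exists x', U' x' /\ P' x')).
Proof.
move=> forth back PP'; split; split.
- by move=> H x' /[dup] /back [x Ux Rx] U'x'; apply/(PP' x x' Ux Rx)/H.
- by move=> H x /[dup] /forth [x' U'x' Rx] Ux; apply/(PP' x x' Ux Rx)/H.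
- by move=> [x [/[dup] /forth [x' U'x' Rx] Ux Px]]; exists x'; split=> //; apply/(PP' x x' Ux Rx).
- by move=> [x' [/[dup] /back [x Ux Rx] U'x' Px']]; exists x; split=> //; apply/(PP' x x' Ux Rx).
Qed.

Section Span.
Variables (F : fieldType) (V : lmodType F).
Implicit Types (s S ys : seq V) (x y : V).

Fixpoint in_span s x : Prop :=
  match s with
  | [::] => x = 0
  | a :: s' => exists c : F, in_span s' (x - c *: a)
  end.

Lemma in_span0 s : in_span s 0.
Proof. by elim: s => [|a s IH] //=; exists 0; rewrite scale0r subr0. Qed.

Lemma in_span_comb s c x y : in_span s x -> in_span s y -> in_span s (c *: x + y).
Proof.
elim: s x y => [|a s IH] x y /=; first by move=> -> ->; rewrite scaler0 addr0.
move=> [cx Hx] [cy Hy]; exists (c * cx + cy).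
have -> : c *: x + y - (c * cx + cy) *: a = c *: (x - cx *: a) + (y - cy *: a).
  by rewrite scalerDl scalerBr scalerA opprD addrACA.
exact: IH.
Qed.

Lemma in_spanZ s c x : in_span s x -> in_span s (c *: x).
Proof. by move=> Hx; rewrite -[_ *: _]addr0; apply: in_span_comb (in_span0 s). Qed.

Lemma in_spanD s x y : in_span s x -> in_span s y -> in_span s (x + y).
Proof. by rewrite -{2}[x]scale1r; apply: in_span_comb. Qed.

Lemma in_spanN s x : in_span s x -> in_span s (- x).
Proof. by rewrite -scaleN1r; apply: in_spanZ. Qed.

Lemma mem_in_span s x : x \in s -> in_span s x.
Proof.
elim: s => [|a s IH] //=; rewrite in_cons => /orP [/eqP ->|/IH Hx].
  by exists 1; rewrite scale1r subrr; apply: in_span0.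
by exists 0; rewrite scale0r subr0.
Qed.

Lemma in_span_trans s t x :
  in_span s x -> (forall z, z \in s -> in_span t z) -> in_span t x.
Proof.
elim: s x => [|a s IH] x /=; first by move=> -> _; apply: in_span0.
move=> [c Hx] Hs; rewrite -(subrK (c *: a) x) addrC.
apply: in_span_comb; first by apply: Hs; rewrite mem_head.
by apply: IH => // z Hz; apply: Hs; rewrite in_cons Hz orbT.
Qed.

Lemma in_span_subset s t x : {subset s <= t} -> in_span s x -> in_span t x.
Proof. by move=> st Hx; apply: (in_span_trans Hx) => z /st; apply: mem_in_span. Qed.

Lemma in_spanP s x : in_span s x <-> span_of s x.
Proof.
elim: s x => [|a s IH] x /=; split.
- by move=> ->; exists (fun _ => 0); rewrite big_ord0.
- by move=> [c ->]; rewrite big_ord0.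
- move=> [c /IH [d Hd]].
  exists (fun i : 'I_(size s).+1 => if unlift ord0 i is Some j then d j else c).
  rewrite big_ord_recl unlift_none -(subrK (c *: a) x) addrC Hd.
  by congr (_ + _); apply: eq_bigr => i _; rewrite liftK.
- move=> [c ->]; exists (c ord0); rewrite big_ord_recl addrAC subrr add0r.
  by apply/IH; exists (fun j => c (lift ord0 j)).
Qed.

Lemma notin_span_scale_addr_eq0 S c x y :
  ~ in_span S x -> in_span S y -> (c *: x + y = 0 <-> c = 0 /\ y = 0).
Proof.
move=> Sx Sy; split => [cxy0|[-> ->]]; last by rewrite scale0r addr0.
have [c0|cn0] := eqVneq c 0; first by move: cxy0; rewrite c0 scale0r add0r.
have cx : c *: x = - y by apply/eqP; rewrite -addr_eq0 cxy0.
case: Sx; rewrite -[x]scale1r -(mulVf cn0) -scalerA cx.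
by apply/in_spanZ/in_spanN.
Qed.

Fixpoint indep_over S ys : Prop :=
  match ys with
  | [::] => True
  | b :: ys' => ~ in_span S b /\ indep_over (b :: S) ys'
  end.

Lemma exists_indep_over : infinite_dim V -> forall n S, exists2 B, size B = n & indep_over S B.
Proof.
move=> V_infinite; elim=> [|n IH] S; first by exists [::].
have [x /in_spanP Sx] := V_infinite S.
by have [B sizeB indepB] := IH (x :: S); exists (x :: B); rewrite /= ?sizeB.
Qed.

Lemma steinitz_exchange S b ys : ~ in_span S b -> in_span (ys ++ S) b ->
  exists y zs, [/\ size ys = (size zs).+1, {subset ys <= y :: zs}
                 & in_span (zs ++ b :: S) y].
Proof.
move=> Sb; elim: ys => [|y0 ys IH] /=; first by [].
move=> [c Hc]; have [c0|cn0] := eqVneq c 0.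
  move: Hc; rewrite c0 scale0r subr0 => /IH [y [zs [sizeys ys_sub Hy]]].
  exists y, (y0 :: zs); split; first by rewrite /= sizeys.
    move=> z; rewrite !in_cons => /orP [->|/ys_sub]; first by rewrite orbT.
    by rewrite in_cons => /orP [->|->]; rewrite ?orbT.
  by apply: in_span_subset Hy => z; rewrite /= !(in_cons, mem_cat) => /orP [->|->]; rewrite ?orbT.
exists y0, ys; split=> //.
have -> : y0 = c^-1 *: (b - (b - c *: y0)).
  by rewrite opprB addrC subrK scalerA mulVf // scale1r.
apply/in_spanZ/in_spanD; first by apply/mem_in_span; rewrite mem_cat mem_head orbT.
apply/in_spanN/(in_span_subset _ Hc) => z.
by rewrite !mem_cat in_cons => /orP [->|->]; rewrite ?orbT.
Qed.

Lemma indep_over_size_le S B ys :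
  indep_over S B -> (forall b, b \in B -> in_span (ys ++ S) b) -> (size B <= size ys)%N.
Proof.
elim: B S ys => [|b B IH] S ys //= [Sb indepB] B_span.
have [y [zs [-> ys_sub Hy]]] := steinitz_exchange Sb (B_span b (mem_head b B)).
rewrite ltnS; apply: (IH _ _ indepB) => b' Hb'.
apply: (in_span_trans (B_span b' _)); first by rewrite in_cons Hb' orbT.
move=> z; rewrite mem_cat => /orP [/ys_sub|Sz]; last first.
  by apply: mem_in_span; rewrite mem_cat in_cons Sz !orbT.
rewrite in_cons => /orP [/eqP ->//|zsz].
by apply: mem_in_span; rewrite mem_cat zsz.
Qed.

Lemma exists_notin_span (W : V -> Prop) S B ys : indep_over S B ->
  (forall b, b \in B -> W b) -> (size ys < size B)%N ->
  exists2 x, W x & ~ in_span (ys ++ S) x.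
Proof.
move=> indepB B_W small; apply: NNPP => none.
suff : (size B <= size ys)%N by rewrite leqNgt small.
apply: (indep_over_size_le indepB) => b Bb; apply: NNPP => ys_b.
by apply: none; exists b => //; apply: B_W.
Qed.

Definition span_finsub s : FinSub V :=
  exist _ (span_of s) (ex_intro _ s (fun x => iff_refl _)).

Lemma finsub_span_closed (W : FinSub V) s x :
  (forall z, z \in s -> proj1_sig W z) -> in_span s x -> proj1_sig W x.
Proof.
case: W => W [sW HW] /= s_W /in_span_trans s_x; apply/HW/in_spanP/s_x.
by move=> z /s_W /HW /in_spanP.
Qed.

Lemma finsub_directed (W1 W2 : FinSub V) : exists W, fs_le W1 W /\ fs_le W2 W.
Proof.
case: W1 W2 => [W1 [s1 H1]] [W2 [s2 H2]]; exists (span_finsub (s1 ++ s2)).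
split=> x /=; [move/H1|move/H2] => /in_spanP Hx; apply/in_spanP/(in_span_subset _ Hx) => z;
  by rewrite mem_cat => ->; rewrite ?orbT.
Qed.
End Span.

Section Terms.
Variables (F : fieldType) (V : lmodType F).
Implicit Types (t : term F V) (f : formula F V) (e : nat -> V) (C : seq V) (L : seq nat).

Fixpoint consts_of_term t : seq V :=
  match t with
  | Tvar _ | Tzero => [::]
  | Tconst v => [:: v]
  | Tadd t u => consts_of_term t ++ consts_of_term u
  | Topp t | Tscale _ t => consts_of_term t
  end.

Fixpoint consts_of f : seq V :=
  match f with
  | Fequ t u => consts_of_term t ++ consts_of_term u
  | Ffalse => [::]
  | Fnot g | Fforall _ g | Fexists _ g => consts_of g
  | Fand g h | For g h | Fimp g h => consts_of g ++ consts_of h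
  end.

Fixpoint qdepth f : nat :=
  match f with
  | Fequ _ _ | Ffalse => 0
  | Fnot g => qdepth g
  | Fand g h | For g h | Fimp g h => maxn (qdepth g) (qdepth h)
  | Fforall _ g | Fexists _ g => (qdepth g).+1
  end.

Lemma consts_in_term_of (P : V -> Prop) t :
  (forall v, v \in consts_of_term t -> P v) -> consts_in_term P t.
Proof.
elim: t => [k|v||t IHt u IHu|t IHt|a t IHt] //= Ht; first by apply: Ht; rewrite mem_head.
by split; [apply: IHt|apply: IHu] => v Hv; apply: Ht; rewrite mem_cat Hv ?orbT.
Qed.

Lemma consts_in_of (P : V -> Prop) f :
  (forall v, v \in consts_of f -> P v) -> consts_in P f.
Proof.
elim: f => [t u| |g IH|g IHg h IHh|g IHg h IHh|g IHg h IHh|k g IH|k g IH] //= Hf;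
  try (by split; [apply: IHg|apply: IHh] => v Hv; apply: Hf; rewrite mem_cat Hv ?orbT).
by split; apply: consts_in_term_of => v Hv; apply: Hf; rewrite mem_cat Hv ?orbT.
Qed.

Definition term_over C L t := consts_in_term (fun v => v \in C) t /\ {subset fv_term t <= L}.

Lemma term_over_add C L t u : term_over C L t -> term_over C L u -> term_over C L (Tadd t u).
Proof.
by move=> [Ct Lt] [Cu Lu]; split=> // m; rewrite mem_cat => /orP [/Lt|/Lu].
Qed.

Lemma in_span_eval C L e t : term_over C L t -> in_span (map e L ++ C) (eval_term e t).
Proof.
elim: t => [k|v||t IHt u IHu|t IHt|a t IHt] [/= Ct Lt].
- by apply: mem_in_span; rewrite mem_cat map_f // Lt // mem_head.
- by apply: mem_in_span; rewrite mem_cat Ct orbT.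
- exact: in_span0.
- by case: Ct => Ct Cu; apply: in_spanD; [apply: IHt|apply: IHu];
    split=> // m Hm; apply: Lt; rewrite mem_cat Hm ?orbT.
- exact/in_spanN/IHt.
- exact/in_spanZ/IHt.
Qed.

Lemma eval_of_in_span C L e x :
  in_span (map e L ++ C) x -> exists2 t, term_over C L t & eval_term e t = x.
Proof.
have vals : forall z, z \in map e L ++ C -> exists2 t, term_over C L t & eval_term e t = z.
  move=> z; rewrite mem_cat => /orP [/mapP [k Lk ->]|Cz].
    by exists (Tvar F V k); split=> // m; rewrite inE => /eqP ->.
  by exists (Tconst F z).
elim: (map e L ++ C) x vals => [|a s IH] x vals /=.
  by move=> ->; exists (Tzero F V).
move=> [c /IH [|t Ht tx]]; first by move=> z sz; apply: vals; rewrite in_cons sz orbT.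
have [ta Hta ta_a] := vals a (mem_head a s).
exists (Tadd (Tscale c ta) t); first exact: term_over_add.
by rewrite /= tx ta_a addrC subrK.
Qed.

Fixpoint lin_coef n t : F :=
  match t with
  | Tvar m => if m == n then 1 else 0
  | Tconst _ | Tzero => 0
  | Tadd t u => lin_coef n t + lin_coef n u
  | Topp t => - lin_coef n t
  | Tscale a t => a * lin_coef n t
  end.

Fixpoint drop_var n t : term F V :=
  match t with
  | Tvar m => if m == n then Tzero F V else Tvar F V m
  | Tconst v => Tconst F v
  | Tzero => Tzero F V
  | Tadd t u => Tadd (drop_var n t) (drop_var n u)
  | Topp t => Topp (drop_var n t)
  | Tscale a t => Tscale a (drop_var n t)
  end.

Lemma eval_upd e n x t :
  eval_term (upd e n x) t = lin_coef n t *: x + eval_term e (drop_var n t).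
Proof.
elim: t => [m|v||t IHt u IHu|t IHt|a t IHt] /=.
- by rewrite /upd; case: (m == n); rewrite /= ?scale1r ?addr0 ?scale0r ?add0r.
- by rewrite scale0r add0r.
- by rewrite scale0r addr0.
- by rewrite IHt IHu scalerDl addrACA.
- by rewrite IHt opprD scaleNr.
- by rewrite IHt scalerDr scalerA.
Qed.

Lemma term_over_drop_var C L n t : term_over C (n :: L) t -> term_over C L (drop_var n t).
Proof.
elim: t => [k|v||t IHt u IHu|t IHt|a t IHt] [/= Ct Lt] //.
- case: eqVneq => [//|kn]; split=> // m; rewrite inE => /eqP ->.
  by move: (Lt k (mem_head k [::])); rewrite in_cons (negbTE kn).
- by case: Ct => Ct Cu; apply: term_over_add; [apply: IHt|apply: IHu];
    split=> // m Hm; apply: Lt; rewrite mem_cat Hm ?orbT.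
- exact: IHt.
- exact: IHt.
Qed.

Definition same_relations C L e e' :=
  forall t, term_over C L t -> (eval_term e t = 0 <-> eval_term e' t = 0).

Lemma same_relations_upd_eval C L e e' n t0 : same_relations C L e e' ->
  term_over C L t0 ->
  same_relations C (n :: L) (upd e n (eval_term e t0)) (upd e' n (eval_term e' t0)).
Proof.
move=> rel_ee' t0_over t /(term_over_drop_var (n:=n)) t_over; rewrite !eval_upd.
exact: (rel_ee' (Tadd (Tscale (lin_coef n t) t0) (drop_var n t)) (term_over_add _ _)).
Qed.

Lemma same_relations_upd_fresh C L e e' n x x' : same_relations C L e e' ->
  ~ in_span (map e L ++ C) x -> ~ in_span (map e' L ++ C) x' ->
  same_relations C (n :: L) (upd e n x) (upd e' n x').
Proof.
move=> rel_ee' x_fresh x'_fresh t /(term_over_drop_var (n:=n)) t_over; rewrite !eval_upd.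
rewrite (notin_span_scale_addr_eq0 _ x_fresh (in_span_eval e t_over)).
by rewrite (notin_span_scale_addr_eq0 _ x'_fresh (in_span_eval e' t_over)) (rel_ee' _ t_over).
Qed.
End Terms.

Section Transfer.
Variables (F : fieldType) (V : lmodType F) (W : V -> Prop) (C B : seq V).
Hypothesis W_span_closed : forall s x, (forall z, z \in s -> W z) -> in_span s x -> W x.
Hypothesis C_W : forall c, c \in C -> W c.
Hypothesis B_W : forall b, b \in B -> W b.
Hypothesis B_indep : indep_over C B.
Hypothesis V_infinite : infinite_dim V.
Implicit Types (f : formula F V) (e : nat -> V) (L : seq nat).

(* [True] is membership in the universe of V, as in [holds (fun _ => True)]. *)
Lemma extend_forth e e' L n x : same_relations C L e e' ->
  exists2 x', True & same_relations C (n :: L) (upd e n x) (upd e' n x').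
Proof.
move=> rel_ee'; have [/eval_of_in_span [t0 t0_over <-]|x_fresh] :=
  classic (in_span (map e L ++ C) x).
  by exists (eval_term e' t0) => //; apply: same_relations_upd_eval.
have [x' /in_spanP x'_fresh] := V_infinite (map e' L ++ C).
by exists x' => //; apply: same_relations_upd_fresh.
Qed.

Lemma extend_back e e' L n x' : same_relations C L e e' ->
  (forall m, m \in L -> W (e m)) -> (size L < size B)%N ->
  exists2 x, W x & same_relations C (n :: L) (upd e n x) (upd e' n x').
Proof.
move=> rel_ee' L_W small; have [/eval_of_in_span [t0 t0_over <-]|x'_fresh] :=
  classic (in_span (map e' L ++ C) x').
  exists (eval_term e t0); last exact: same_relations_upd_eval.
  apply: (W_span_closed _ (in_span_eval e t0_over)) => z.
  by rewrite mem_cat => /orP [/mapP [m /L_W Wm ->]|/C_W].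
have [|x Wx x_fresh] := exists_notin_span (ys := map e L) B_indep B_W; first by rewrite size_map.
by exists x => //; apply: same_relations_upd_fresh.
Qed.

Lemma holds_transfer f e e' L :
  consts_in (fun v => v \in C) f -> {subset fv f <= L} -> (forall m, m \in L -> W (e m)) ->
  same_relations C L e e' -> (size L + qdepth f <= size B)%N ->
  (holds W e f <-> holds (fun _ => True) e' f).
Proof.
elim: f e e' L => [t u| |g IH|g IHg h IHh|g IHg h IHh|g IHg h IHh|k g IH|k g IH]
  e e' L /= Cf Lf L_W rel_ee' depth.
- have sub_eq0 (a b : V) : a - b = 0 <-> a = b by split=> [/subr0_eq|->]; rewrite ?subrr.
  by have /= := rel_ee' (Tadd t (Topp u)) (conj Cf Lf); rewrite !sub_eq0.
- by [].
- by rewrite (IH e e' L).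
1-3: case: Cf => Cg Ch; rewrite (IHg e e' L) ?(IHh e e' L) //;
  by [move=> m Hm; apply: Lf; rewrite mem_cat Hm ?orbT
     | apply: leq_trans depth; rewrite leq_add2l ?leq_maxl ?leq_maxr].
all: have Lg : {subset fv g <= k :: L} by move=> m Hm; rewrite in_cons;
  case: eqVneq => //= mk; apply: Lf; rewrite mem_filter mk.
all: have Lk_W x : W x -> forall m, m \in k :: L -> W (upd e k x m) by move=> Wx m;
  rewrite in_cons /upd; case: eqVneq => //= _; apply: L_W.
all: have small : (size L < size B)%N by apply: leq_trans depth; rewrite addnS ltnS leq_addr.
all: have depth' : (size (k :: L) + qdepth g <= size B)%N by rewrite /= addSnnS.
all: by have [] := back_forth_iff_quantifiers (U' := fun _ => True)
  (R := fun x x' => same_relations C (k :: L) (upd e k x) (upd e' k x'))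
  (fun x _ => extend_forth k x rel_ee') (fun x' _ => extend_back k x' rel_ee' L_W small)
  (fun x x' Wx rel => IH _ _ (k :: L) Cf Lg (Lk_W x Wx) rel depth').
Qed.
End Transfer.

Lemma Th_eventually_ThV (F : fieldType) (V : lmodType F) :
  infinite_dim V -> forall th : formula F V, sentence th ->
  exists W0 : FinSub V, forall W, fs_le W0 W -> (Th (proj1_sig W) th <-> ThV th).
Proof.
move=> V_infinite th th_closed.
have [B sizeB B_indep] := exists_indep_over V_infinite (qdepth th) (consts_of th).
exists (span_finsub (consts_of th ++ B)) => W W0_W.
have CB_W z : z \in consts_of th ++ B -> proj1_sig W z.
  by move=> CBz; apply/W0_W/in_spanP/mem_in_span.
have C_W z (Cz : z \in consts_of th) : proj1_sig W z by apply: CB_W; rewrite mem_cat Cz.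
have B_W z (Bz : z \in B) : proj1_sig W z by apply: CB_W; rewrite mem_cat Bz orbT.
have holdsWV : holds (proj1_sig W) (fun _ => 0) th <-> holds (fun _ => True) (fun _ => 0) th.
  apply: (holds_transfer (@finsub_span_closed _ _ W) C_W B_W B_indep V_infinite (L := [::])) => //.
  - exact: consts_in_of.
  - by rewrite th_closed.
  - by rewrite sizeB.
rewrite /ThV /Th holdsWV.
by have -> : consts_in (proj1_sig W) th <-> consts_in (fun _ => True) th
  by split=> _; apply: consts_in_of.
Qed.

Theorem mainTheorem11 (F : fieldType) (V : lmodType F) :
  infinite_dim V ->
  is_lim (@fs_le F V) (fun W : FinSub V => Th (proj1_sig W)) (ThV (V:=V)).
Proof.
move=> V_infinite.
apply: (is_lim_eventually (P := @sentence F V) (span_finsub [::])).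
- exact: finsub_directed.
- by move=> W th [].
- by move=> th [].
- exact: Th_eventually_ThV.
Qed.
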